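(* Let $\mathbb F$ be algebraically closed and $A(s),B(s)\in\mathbb F[s]^{p\times q}$ pencils, with ranks $\rho_1,\rho_2$, $\rho=\min\{\rho_1,\rho_2\}$, homogeneous invariant factors $\phi_1\mid\cdots\mid\phi_{\rho_1}$ of $A(s)$ and $\psi_1\mid\cdots\mid\psi_{\rho_2}$ of $B(s)$, column minimal indices $c_1\ge\dots\ge c_{q-\rho_1}$ of $A$ and $d_1\ge\dots\ge d_{q-\rho_2}$ of $B$, row minimal indices $u_1\ge\dots\ge u_{p-\rho_1}$ of $A$ and $v_1\ge\dots\ge v_{p-\rho_2}$ of $B$. Let $(r_1,\dots),(s_1,\dots),(r'_1,\dots),(s'_1,\dots)$ be the conjugate partitions of $(c_i),(d_i),(u_i),(v_i)$, $r_0=q-\rho_1$, $s_0=q-\rho_2$, $r'_0=p-\rho_1$, $s'_0=p-\rho_2$, $\mathbf r=(r_0,r_1,\dots)$, $\mathbf s=(s_0,s_1,\dots)$, $\mathbf r'=(r'_0,\dots)$, $\mathbf s'=(s'_0,\dots)$. Assume $\mathbf r\ne\mathbf s$, $\mathbf r'=\mathbf s'$ and $G\le\sum_{i=1}^\rho\min\{r_i,s_i\}+\max\{e,e'\}$, where $x=\min\{i:r_i\ne s_i\}$, $e=\min\{i\ge x-1: s_{i+1}\ge r_{i+1}\}$, $e'=\min\{i\ge x-1: r_{i+1}\ge s_{i+1}\}$, $G=\rho-1-\sum_{i=1}^{\rho-1}\deg\gcd(\phi_{i+1},\psi_{i+1})-\sum_{i=1}^\rho r'_i$. Then there exist integers $b'>a'\ge0$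 such that $s_i-r_i=0$ for $0\le i\le a'$, $-(a'+2)\le s_i-r_i\le a'+2$ for $a'+1\le i\le b'$, and $-(b'+1)\le s_i-r_i\le b'+1$ for $i\ge b'+1$. Moreover, if $s_i-r_i=-(a'+2)$ for some $i\in\{a'+1,\dots,b'\}$ or $s_i-r_i=-(b'+1)$ for some $i>b'$, then $\phi_j\mid\psi_j$ for $1\le j\le\rho$; and if $s_i-r_i=a'+2$ for some $i\in\{a'+1,\dots,b'\}$ or $s_i-r_i=b'+1$ for some $i>b'$, then $\psi_j\mid\phi_j$ for $1\le j\le\rho$.
   Context: A pencil $A(s)=A_0+sA_1$ has rank equal to its rank over $\mathbb F(s)$. Homogeneous invariant factors are the invariant factors (homogeneous polynomials in $\mathbb F[s,t]$) of $tA_0+sA_1$, with conventions $\phi_i=1$ for $i<1$, $\phi_i=0$ for $i>\rho_1$ (similarly $\psi_i$). Column (row) minimal indices are the indices $k$ of the blocks $L_k(s)\in\mathbb F[s]^{k\times(k+1)}$ ($s$ on the diagonal, $1$ on superdiagonal), resp. $L_k(s)^T$, in the Kronecker canonical form, $q-\rho$ (resp. $p-\rho$) of them counting zeros. Conjugate of $(a_1,\dots,a_n)$ nonincreasing nonnegative: $(\bar a_1,\bar a_2,\dots)$, $\bar a_k=\#\{i:a_i\ge k\}$. *)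

From HB Require Import structures.
From mathcomp Require Import all_boot all_order all_algebra.
From mathcomp Require Import fraction.
From mathcomp Require Import mpoly.
Set Implicit Arguments. Unset Strict Implicit. Unset Printing Implicit Defensive.
Import Order.TTheory GRing.Theory Num.Theory.
Local Open Scope ring_scope.

Definition dvdr (R : comNzRingType) (a b : R) : Prop := exists c : R, b = c * a.

Definition is_gcd (R : comNzRingType) (g : R) (S : R -> Prop) : Prop :=
  (forall x, S x -> dvdr g x) /\
  (forall h, (forall x, S x -> dvdr h x) -> dvdr h g).

(* total degree of a multivariate polynomial (degree of 0 taken to be 0) *)
Definition tdeg (F : fieldType) (n : nat) (P : {mpoly F[n]}) : nat := (msize P).-1.

(* rank of A(s) = A0 + s A1 over the field F(s) *)
Definition pencil_rank (F : fieldType) (p q : nat) (A0 A1 : 'M[F]_(p, q)) : nat :=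
  \rank (map_mx (@FracField.tofrac {poly F})
           (map_mx polyC A0 + 'X *: map_mx polyC A1)).

(* the homogeneous pencil t A0 + s A1 in F[s,t]; s = 'X_0, t = 'X_1 *)
Definition hpencil (F : fieldType) (p q : nat) (A0 A1 : 'M[F]_(p, q))
  : 'M[{mpoly F[2]}]_(p, q) :=
  \matrix_(i, j) ('X_(1 : 'I_2) * (A0 i j)%:MP + 'X_(0 : 'I_2) * (A1 i j)%:MP).

(* the k x k minors of M (arbitrary choices of rows/columns: non-injective
   choices give 0 and reorderings give +-minors, so the gcd is unchanged) *)
Definition is_minor (R : comNzRingType) (p q k : nat) (M : 'M[R]_(p, q)) (x : R)
  : Prop :=
  exists (f : 'I_k -> 'I_p) (g : 'I_k -> 'I_q),
    x = \det (\matrix_(a, b) M (f a) (g b)).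

(* phi_1, ..., phi_rk are the invariant factors of M (rank rk): for every
   1 <= k <= rk, phi_1 * ... * phi_k is a gcd of the k x k minors
   (the k-th determinantal divisor), with the conventions phi_i = 1 for i < 1
   and phi_i = 0 for i > rk *)
Definition is_inv_factors (R : comNzRingType) (p q : nat) (M : 'M[R]_(p, q))
  (rk : nat) (phi : nat -> R) : Prop :=
  [/\ phi 0%N = 1,
      (forall i, (rk < i)%N -> phi i = 0) &
      (forall k, (1 <= k <= rk)%N ->
         is_gcd (\prod_(1 <= i < k.+1) phi i) (is_minor k M))].

Definition is_hom_inv_factors (F : fieldType) (p q : nat) (A0 A1 : 'M[F]_(p, q))
  (phi : nat -> {mpoly F[2]}) : Prop :=
  is_inv_factors (hpencil A0 A1) (pencil_rank A0 A1) phi.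

Inductive kblock (F : Type) :=
| KL of nat          (* L_k : k x (k+1), s on diagonal, 1 on superdiagonal *)
| KLT of nat         (* L_k^T : (k+1) x k *)
| KJ of F & nat      (* finite eigenvalue block  J_k(a) + s I_k *)
| KN of nat.         (* infinite eigenvalue block I_k + s J_k(0) *)

Definition kb_rows F (b : kblock F) : nat :=
  match b with KL k => k | KLT k => k.+1 | KJ _ k => k | KN k => k end.
Definition kb_cols F (b : kblock F) : nat :=
  match b with KL k => k.+1 | KLT k => k | KJ _ k => k | KN k => k end.

Definition kb_coef0 (F : nzRingType) (b : kblock F) (i j : nat) : F :=
  match b with
  | KL _ => (j == i.+1)%:R
  | KLT _ => (i == j.+1)%:R
  | KJ a _ => if i == j then a else (j == i.+1)%:R
  | KN _ => (i == j)%:R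
  end.
Definition kb_coef1 (F : nzRingType) (b : kblock F) (i j : nat) : F :=
  match b with
  | KL _ => (i == j)%:R
  | KLT _ => (i == j)%:R
  | KJ _ _ => (i == j)%:R
  | KN _ => (j == i.+1)%:R
  end.

Fixpoint kcf_entry (F : nzRingType) (sel : kblock F -> nat -> nat -> F)
  (bs : seq (kblock F)) (i j : nat) : F :=
  match bs with
  | [::] => 0
  | b :: bs' =>
      if (i < kb_rows b)%N && (j < kb_cols b)%N then sel b i j
      else if (kb_rows b <= i)%N && (kb_cols b <= j)%N then
        kcf_entry sel bs' (i - kb_rows b) (j - kb_cols b)
      else 0
  end.

Definition is_KCF (F : fieldType) (p q : nat) (A0 A1 : 'M[F]_(p, q))
  (bs : seq (kblock F)) : Prop :=
  [/\ sumn (map (@kb_rows F) bs) = p,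
      sumn (map (@kb_cols F) bs) = q &
      exists (P : 'M[F]_p) (Q : 'M[F]_q),
        [/\ P \in unitmx, Q \in unitmx,
            P *m A0 *m Q = \matrix_(i, j) kcf_entry (@kb_coef0 F) bs i j &
            P *m A1 *m Q = \matrix_(i, j) kcf_entry (@kb_coef1 F) bs i j]].

Definition col_min_ind F (bs : seq (kblock F)) : seq nat :=
  pmap (fun b => if b is KL k then Some k else None) bs.
Definition row_min_ind F (bs : seq (kblock F)) : seq nat :=
  pmap (fun b => if b is KLT k then Some k else None) bs.

Definition conj_part (a : seq nat) (k : nat) : nat := count (fun x => k <= x)%N a.

(* the sequence (r_0, r_1, ...): r_0 = n0, r_k = conjugate of a for k >= 1 *)
Definition ext_conj (n0 : nat) (a : seq nat) (k : nat) : nat :=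
  if k == 0%N then n0 else conj_part a k.

Definition is_least (P : nat -> Prop) (n : nat) : Prop :=
  P n /\ forall m, P m -> (n <= m)%N.

(* A pencil in Kronecker form has rank  sum c_i + sum u_i + (size of the regular
   part), and keeping in each singular block either its s-diagonal or its
   t-diagonal gives the two maximal minors  s^N H  and  t^N H, where H is the
   determinant of the regular part.  The product of the homogeneous invariant
   factors divides both, hence divides H because s^N and t^N are coprime; so
   sum deg phi_i <= size of the regular part, i.e.
   sum r_i + sum r'_i + sum deg phi_i <= rho.  Since r' = s', the hypothesis on
   G becomes  sum_i (r_i - s_i)^+ + delta_A <= max(e, e') + 1,  where
   delta_A = sum deg phi_i - sum deg gcd(phi_(i+1), psi_(i+1)) >= 0, and
   symmetrically for s.  If s_x < r_x, then r_i - s_i >= 1 on the whole window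
   x <= i <= e; this nearly exhausts the budget, and what is left bounds every
   other difference, with a' = x - 1 and b' = e.  Reaching a bound exhausts the
   budget completely, so delta_A = 0 (or delta_B = 0), which forces
   phi_j | psi_j (or psi_j | phi_j). *)

From HB Require Import structures.
From mathcomp Require Import all_boot all_order all_algebra fraction mpoly zify.
From mathcomp Require Import fingroup perm.
Set Implicit Arguments. Unset Strict Implicit. Unset Printing Implicit Defensive.
Import Order.TTheory GRing.Theory Num.Theory.
Local Open Scope ring_scope.

(** * Sums of natural numbers *)

Lemma sum_index_window m n lo hi : (m <= lo <= hi)%N -> (hi <= n)%N ->
  (\sum_(m <= j < n) (lo <= j < hi) = hi - lo)%N.
Proof.
move=> /andP [mlo lohi] hin.
rewrite (big_cat_nat mlo) ?(leq_trans lohi) //= (big_cat_nat lohi hin) /=.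
rewrite big1_seq => [|j /andP [_]]; last first.
  by rewrite mem_index_iota => /andP [_ jlo]; rewrite leqNgt jlo.
rewrite [\sum_(hi <= j < n) _]big1_seq => [|j /andP [_]]; last first.
  by rewrite mem_index_iota => /andP [hij _]; rewrite ltnNge hij andbF.
rewrite (eq_big_nat _ _ (F2 := fun=> 1%N)) => [|j ->] //.
by rewrite sum_nat_const_nat muln1 add0n addn0.
Qed.

Lemma leq_term_window_sum (f : nat -> nat) n lo hi i :
  (1 <= lo <= hi)%N -> (hi <= n.+1)%N -> (forall j, lo <= j < hi -> 0 < f j)%N ->
  (1 <= i <= n)%N ->
  (f i + (hi - lo) <= \sum_(1 <= j < n.+1) f j + (lo <= i < hi))%N.
Proof.
move=> lohi hin fpos i_n; rewrite -(sum_index_window lohi hin).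
have iI : i \in index_iota 1 n.+1 by rewrite mem_index_iota ltnS.
rewrite !(bigD1_seq i iI (iota_uniq _ _)) /=.
have : (\sum_(j <- index_iota 1 n.+1 | j != i) (lo <= j < hi) <=
        \sum_(j <- index_iota 1 n.+1 | j != i) f j)%N.
  by apply: leq_sum => j _; case: (boolP (lo <= j < hi)%N) => // /fpos.
lia.
Qed.

Lemma leq_sumn_mem (c : seq nat) y : y \in c -> (y <= sumn c)%N.
Proof.
elim: c => [|z c IH] //=; rewrite in_cons => /predU1P [->|/IH]; first exact: leq_addr.
by move/leq_trans; apply; apply: leq_addl.
Qed.

Lemma eq_of_sum_leq (I : eqType) (r : seq I) (f h : I -> nat) : uniq r ->
  (forall j, j \in r -> f j <= h j)%N -> (\sum_(j <- r) h j <= \sum_(j <- r) f j)%N ->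
  forall i, i \in r -> f i = h i.
Proof.
move=> r_uniq fh sum_le i ir; apply/eqP; rewrite eqn_leq fh //=.
move: sum_le; rewrite !(bigD1_seq i ir r_uniq) /=.
have : (\sum_(j <- r | j != i) f j <= \sum_(j <- r | j != i) h j)%N.
  by rewrite big_seq_cond [leqRHS]big_seq_cond; apply: leq_sum => j /andP [/fh].
lia.
Qed.

Lemma sum_subn_minn (f g : nat -> nat) m n :
  (\sum_(m <= i < n) f i = \sum_(m <= i < n) (f i - g i) + \sum_(m <= i < n) minn (f i) (g i))%N.
Proof. by rewrite -big_split; apply: eq_bigr => i _ /=; lia. Qed.

Lemma sum_Posz (f : nat -> nat) m n :
  \sum_(m <= i < n) (f i)%:Z = (\sum_(m <= i < n) f i)%N%:Z.
Proof. by rewrite (big_morph Posz PoszD (erefl _)). Qed.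

(** * Divisibility and degree in F[s, t] *)

Section Divisibility.
Variable R : comNzRingType.
Implicit Types a b c d : R.

Lemma dvdr_trans a b c : dvdr a b -> dvdr b c -> dvdr a c.
Proof. by move=> [x ->] [y ->]; exists (y * x); rewrite mulrA. Qed.

Lemma dvdr0 d : dvdr d 0. Proof. by exists 0; rewrite mul0r. Qed.

Lemma dvdrD d a b : dvdr d a -> dvdr d b -> dvdr d (a + b).
Proof. by move=> [x ->] [y ->]; exists (x + y); rewrite mulrDl. Qed.

Lemma dvdr_mull d a c : dvdr d a -> dvdr d (c * a).
Proof. by move=> [x ->]; exists (c * x); rewrite mulrA. Qed.

Lemma dvdr_sum (I : Type) (r : seq I) (P : pred I) (f : I -> R) d :
  (forall i, P i -> dvdr d (f i)) -> dvdr d (\sum_(i <- r | P i) f i).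
Proof.
move=> df; elim/big_rec: _ => [|i x Pi dx]; first exact: dvdr0.
exact: dvdrD (df i Pi) dx.
Qed.

End Divisibility.

Section MpolyDegree.
Variables (F : fieldType) (n : nat).
Implicit Types a b c d h : {mpoly F[n]}.

Lemma tdegM a b : a != 0 -> b != 0 -> tdeg (a * b) = (tdeg a + tdeg b)%N.
Proof.
move=> a0 b0; rewrite /tdeg msizeM //.
move: a0 b0; rewrite -!msize_poly_eq0.
by case: (msize a) => // ?; case: (msize b) => // ? _ _; rewrite addnS.
Qed.

Lemma tdeg1 : tdeg (1 : {mpoly F[n]}) = 0%N.
Proof. by rewrite /tdeg msize1. Qed.

Lemma tdegX (i : 'I_n) : tdeg ('X_i : {mpoly F[n]}) = 1%N.
Proof. by rewrite /tdeg msizeX mdeg1. Qed.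

Lemma mpolyX_neq0 (i : 'I_n) : ('X_i : {mpoly F[n]}) != 0.
Proof. by rewrite -msize_poly_eq0 msizeX. Qed.

Lemma tdegXn a k : a != 0 -> tdeg (a ^+ k) = (k * tdeg a)%N.
Proof.
move=> a0; elim: k => [|k IHk]; first by rewrite expr0 tdeg1.
by rewrite exprS tdegM ?expf_neq0 // IHk mulSn.
Qed.

Lemma tdeg_prod (I : eqType) (r : seq I) (f : I -> {mpoly F[n]}) :
  (forall i, i \in r -> f i != 0) -> tdeg (\prod_(i <- r) f i) = \sum_(i <- r) tdeg (f i).
Proof.
elim: r => [|i r IHr] f0; first by rewrite !big_nil tdeg1.
have f0r j : j \in r -> f j != 0 by move=> jr; apply: f0; rewrite in_cons jr orbT.
rewrite !big_cons tdegM ?IHr ?f0 ?mem_head //.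
by rewrite prodf_seq_neq0; apply/allP => j /f0r.
Qed.

Lemma tdeg_eq0P c : c != 0 -> tdeg c = 0%N -> exists2 k : F, k != 0 & c = k%:MP.
Proof.
rewrite -msize_poly_eq0 /tdeg => c0 t0; apply/msize_poly1P.
by case: (msize c) c0 t0 => [|[|]].
Qed.

Lemma dvdr_tdeg a b : dvdr a b -> b != 0 -> a != 0 /\ (tdeg a <= tdeg b)%N.
Proof.
move=> [c ->]; rewrite mulf_eq0 negb_or => /andP [c0 a0].
by rewrite tdegM // leq_addl.
Qed.

Lemma dvdr_tdeg0 a b : a != 0 -> tdeg a = 0%N -> dvdr a b.
Proof.
move=> a0 t0; have [k k0 ->] := tdeg_eq0P a0 t0.
by exists (b * k^-1%:MP); rewrite -mulrA -mpolyCM mulVf // mulr1.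
Qed.

Lemma dvdr_tdeg_eq a b : dvdr a b -> b != 0 -> tdeg a = tdeg b -> dvdr b a.
Proof.
move=> [c ->]; rewrite mulf_eq0 negb_or => /andP [c0 a0].
rewrite tdegM // -[X in X = _]add0n => /addIn/esym/(tdeg_eq0P c0) [k k0 ->].
by exists k^-1%:MP; rewrite mulrA -mpolyCM mulVf // mul1r.
Qed.

Lemma dvdr_mpolyXn_of_eq (i j : 'I_n) N a b : i != j ->
  a * 'X_j ^+ N = b * 'X_i ^+ N -> dvdr ('X_i ^+ N) a.
Proof.
rewrite !mpolyXn => ij e.
have a_low (m : 'X_{1..n}) : (m i < N)%N -> a@_m = 0.
  move=> lt; have := congr1 (mcoeff (U_(j) *+ N + m)%MM) e; rewrite mcoeffMX => ->.
  apply/eqP; rewrite mcoeff_eq0 (perm_mem (msuppMX _ _)); apply/negP => /mapP [m' _].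
  move/(congr1 (fun m0 : 'X_{1..n} => m0 i)) => /=.
  rewrite !mnmDE !mulmnE !mnm1E eq_sym (negbTE ij) eqxx mul0n mul1n add0n => mi.
  by move: lt; rewrite mi ltnNge leq_addr.
exists (\sum_(m <- msupp a) a@_m *: 'X_[(m - U_(i) *+ N)%MM]).
rewrite mulr_suml {1}[a]mpolyE; apply: eq_big_seq => m ma.
rewrite -scalerAl -mpolyXD submK //; apply/mnm_lepP => k.
rewrite mulmnE mnm1E; case: eqP => [<-|_]; last by rewrite mul0n.
rewrite mul1n leqNgt; apply/negP => /a_low; apply/eqP; by rewrite -mcoeff_msupp.
Qed.

Lemma dvdr_mpolyXn_coprime (i j : 'I_n) N d h : i != j -> d != 0 ->
  dvdr d ('X_i ^+ N * h) -> dvdr d ('X_j ^+ N * h) -> dvdr d h.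
Proof.
move=> ij d0 [a ea] [b eb].
have e : a * 'X_j ^+ N = b * 'X_i ^+ N.
  apply: (mulIf d0); rewrite mulrAC -ea [RHS]mulrAC -eb.
  by rewrite mulrAC [RHS]mulrAC [in RHS](mulrC (_ ^+ N)).
have [c ec] := dvdr_mpolyXn_of_eq ij e; exists c.
apply: (mulfI (expf_neq0 N (mpolyX_neq0 i))).
by rewrite ea ec mulrCA mulrA.
Qed.

End MpolyDegree.

Section GcdOfInvariantFactors.
Variables (F : fieldType) (n : nat) (rho : nat) (phi psi g : nat -> {mpoly F[n]}).
Hypothesis phi_neq0 : forall i, (1 <= i <= rho)%N -> phi i != 0.
Hypothesis g_dvd : forall i, (1 <= i < rho)%N -> dvdr (g i) (phi i.+1) /\ dvdr (g i) (psi i.+1).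

Lemma tdeg_gcd_le i : (1 <= i < rho)%N -> (tdeg (g i) <= tdeg (phi i.+1))%N.
Proof. by move=> i_rho; case: (dvdr_tdeg (g_dvd i_rho).1 (phi_neq0 _)) => //; lia. Qed.

Lemma sum_tdeg_gcd_le_shift :
  (\sum_(1 <= i < rho) tdeg (g i) <= \sum_(1 <= i < rho) tdeg (phi i.+1))%N.
Proof. by rewrite big_nat_cond [leqRHS]big_nat_cond; apply: leq_sum => i /andP [/tdeg_gcd_le]. Qed.

Lemma sum_tdeg_gcd_le :
  (\sum_(1 <= i < rho) tdeg (g i) <= \sum_(1 <= i < rho.+1) tdeg (phi i))%N.
Proof.
case: (posnP rho) => [-> | rho_gt0]; first by rewrite big_geq.
by rewrite big_nat_recl // (leq_trans sum_tdeg_gcd_le_shift) ?leq_addl.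
Qed.

(* Equality of the degree sums forces deg phi_1 = 0 and deg g_i = deg phi_(i+1),
   so phi_(i+1) is associate to g_i, which divides psi_(i+1). *)
Lemma dvdr_inv_factors_of_sum_tdeg :
  (\sum_(1 <= i < rho.+1) tdeg (phi i) <= \sum_(1 <= i < rho) tdeg (g i))%N ->
  forall j, (1 <= j <= rho)%N -> dvdr (phi j) (psi j).
Proof.
case: (posnP rho) => [-> _ j /andP [j1 j0] | rho_gt0]; first by move: (leq_trans j1 j0).
rewrite big_nat_recl // => sum_le.
have phi1 : tdeg (phi 1%N) = 0%N by have := sum_tdeg_gcd_le_shift; lia.
have deg_eq : forall i, i \in index_iota 1 rho -> tdeg (g i) = tdeg (phi i.+1).
  apply: eq_of_sum_leq; rewrite ?iota_uniq //; last exact: leq_trans (leq_addl _ _) sum_le.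
  by move=> i; rewrite mem_index_iota => /tdeg_gcd_le.
move=> [|[|i]] // /andP [_ i_rho]; first by apply: dvdr_tdeg0 => //; apply: phi_neq0.
have i_rho' : (1 <= i.+1 < rho)%N by lia.
apply: dvdr_trans (g_dvd i_rho').2; apply: dvdr_tdeg_eq (g_dvd i_rho').1 (phi_neq0 _) _ => //.
by apply: deg_eq; rewrite mem_index_iota.
Qed.

End GcdOfInvariantFactors.

(** * Minors and submatrices *)

Section Minors.
Variable R : comNzRingType.

Lemma det_mulmx_sum_ffun k m (A : 'M[R]_(k, m)) (B : 'M[R]_(m, k)) :
  \det (A *m B) = \sum_(f : {ffun 'I_k -> 'I_m})
     (\prod_i A i (f i)) * \det (\matrix_(i, j) B (f i) j).
Proof.
rewrite /determinant.
transitivity (\sum_(f : {ffun 'I_k -> 'I_m}) \sum_(s : 'S_k)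
    (-1) ^+ s * \prod_i (A i (f i) * B (f i) (s i))).
  rewrite exchange_big; apply: eq_bigr => s _; rewrite -big_distrr /=; congr (_ * _).
  rewrite -(bigA_distr_bigA (fun i j => A i j * B j (s i))) /=.
  by apply: eq_bigr => i _; rewrite mxE.
apply: eq_bigr => f _; rewrite big_distrr /=; apply: eq_bigr => s _.
rewrite big_split /= mulrCA; congr (_ * (_ * _)).
by apply: eq_bigr => i _; rewrite mxE.
Qed.

Lemma dvdr_minor_mull k p p' q (X : 'M[R]_(p', p)) (M : 'M[R]_(p, q)) d :
  (forall y, is_minor k M y -> dvdr d y) -> forall y, is_minor k (X *m M) y -> dvdr d y.
Proof.
move=> dM y [f [g ->]]; rewrite -[\matrix_(a, b) _]/(mxsub f g _) mxsub_mul.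
rewrite det_mulmx_sum_ffun; apply: dvdr_sum => h _; apply/dvdr_mull/dM.
by exists h, g; congr (\det _); apply/matrixP => a b; rewrite !mxE.
Qed.

Lemma dvdr_minor_mulr k p q q' (M : 'M[R]_(p, q)) (Y : 'M[R]_(q, q')) d :
  (forall y, is_minor k M y -> dvdr d y) -> forall y, is_minor k (M *m Y) y -> dvdr d y.
Proof.
move=> dM y [f [g ->]]; rewrite -[\matrix_(a, b) _]/(mxsub f g _) mxsub_mul.
rewrite -det_tr trmx_mul det_mulmx_sum_ffun; apply: dvdr_sum => h _; apply/dvdr_mull/dM.
by exists f, h; rewrite -det_tr; congr (\det _); apply/matrixP => a b; rewrite !mxE.
Qed.

End Minors.

Definition split_map m1 m2 n1 n2 (f1 : 'I_m1 -> 'I_n1) (f2 : 'I_m2 -> 'I_n2)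
    (i : 'I_(m1 + m2)) : 'I_(n1 + n2) :=
  match split i with inl a => lshift n2 (f1 a) | inr a => rshift n1 (f2 a) end.

Lemma mxsub_block_diag (R : nmodType) m1 m2 n1 n2 k1 k2 (A : 'M[R]_(m1, n1))
    (B : 'M[R]_(m2, n2)) (f1 : 'I_k1 -> 'I_m1) (g1 : 'I_k1 -> 'I_n1)
    (f2 : 'I_k2 -> 'I_m2) (g2 : 'I_k2 -> 'I_n2) :
  mxsub (split_map f1 f2) (split_map g1 g2) (block_mx A 0 0 B) =
  block_mx (mxsub f1 g1 A) 0 0 (mxsub f2 g2 B).
Proof.
apply/matrixP => i j; rewrite [LHS]mxE /split_map.
by case: (split_ordP i) => a ->; case: (split_ordP j) => c ->;
  rewrite ?block_mxEul ?block_mxEur ?block_mxEdl ?block_mxEdr ?mxE.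
Qed.

Lemma det_trig_const (R : comNzRingType) k (A : 'M[R]_k) (c : R) :
  is_trig_mx A -> (forall i, A i i = c) -> \det A = c ^+ k.
Proof.
by move=> /det_trig -> Ac; rewrite (eq_bigr _ (fun i _ => Ac i)) prodr_const card_ord.
Qed.

Lemma mxrank_mxsub (K : fieldType) m n m' n' (f : 'I_m' -> 'I_m) (g : 'I_n' -> 'I_n)
    (M : 'M[K]_(m, n)) :
  (\rank (mxsub f g M) <= \rank M)%N.
Proof.
rewrite mxsubrc; apply: leq_trans (mxrankS (rowsub_sub _ _)) _.
by rewrite -mxrank_tr trmx_mxsub -[in X in (_ <= X)%N]mxrank_tr mxrankS ?rowsub_sub.
Qed.

Lemma mxrank_mul_unit (K : fieldType) m n (X : 'M[K]_m) (M : 'M[K]_(m, n)) (Y : 'M[K]_n) :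
  X \in unitmx -> Y \in unitmx -> \rank (X *m M *m Y) = \rank M.
Proof.
move=> uX uY; rewrite mxrankMfree ?row_free_unit //.
by rewrite -mxrank_tr trmx_mul mxrankMfree ?row_free_unit ?unitmx_tr // mxrank_tr.
Qed.

(** * The Kronecker canonical form *)

Definition kb_size F (b : kblock F) : nat :=
  match b with KL k | KLT k | KJ _ k | KN k => k end.
Definition kb_sing F (b : kblock F) : nat :=
  match b with KL k | KLT k => k | _ => 0 end.
Definition kb_reg F (b : kblock F) : nat :=
  match b with KJ _ k | KN k => k | _ => 0 end.

Lemma sumn_kb_size F (bs : seq (kblock F)) :
  sumn (map (@kb_size F) bs) =
  (sumn (col_min_ind bs) + sumn (row_min_ind bs) + sumn (map (@kb_reg F) bs))%N.
Proof. by elim: bs => [|[k|k|a k|k] bs IH] //=; rewrite IH; lia. Qed.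

(* For L_k drop the last column (leaving s on the diagonal) or the first one
   (leaving t on the diagonal), and dually for L_k^T; regular blocks are
   already square. *)
Definition kb_rsel F (sdiag : bool) (b : kblock F) : 'I_(kb_size b) -> 'I_(kb_rows b) :=
  match b as b0 return 'I_(kb_size b0) -> 'I_(kb_rows b0) with
  | KLT k => if sdiag then widen_ord (leqnSn k) else lift ord0
  | KL _ | KJ _ _ | KN _ => id
  end.
Definition kb_csel F (sdiag : bool) (b : kblock F) : 'I_(kb_size b) -> 'I_(kb_cols b) :=
  match b as b0 return 'I_(kb_size b0) -> 'I_(kb_cols b0) with
  | KL k => if sdiag then widen_ord (leqnSn k) else lift ord0
  | KLT _ | KJ _ _ | KN _ => id
  end.
Arguments kb_rsel {F} sdiag b.
Arguments kb_csel {F} sdiag b.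

Fixpoint kcf_rsel F (sdiag : bool) (bs : seq (kblock F)) :
    'I_(sumn (map (@kb_size F) bs)) -> 'I_(sumn (map (@kb_rows F) bs)) :=
  if bs is b :: bs' then split_map (kb_rsel sdiag b) (@kcf_rsel F sdiag bs') else id.
Fixpoint kcf_csel F (sdiag : bool) (bs : seq (kblock F)) :
    'I_(sumn (map (@kb_size F) bs)) -> 'I_(sumn (map (@kb_cols F) bs)) :=
  if bs is b :: bs' then split_map (kb_csel sdiag b) (@kcf_csel F sdiag bs') else id.
Arguments kcf_rsel {F} sdiag bs.
Arguments kcf_csel {F} sdiag bs.

Section KroneckerPencil.
Variables (F : fieldType) (S : comNzRingType) (emb : {rmorphism F -> S}) (t s : S).

Definition kblock_mx (b : kblock F) : 'M[S]_(kb_rows b, kb_cols b) :=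
  \matrix_(i, j) (t * emb (kb_coef0 b i j) + s * emb (kb_coef1 b i j)).

Fixpoint kcf_mx (bs : seq (kblock F)) :
    'M[S]_(sumn (map (@kb_rows F) bs), sumn (map (@kb_cols F) bs)) :=
  match bs with
  | [::] => 0
  | b :: bs' => block_mx (kblock_mx b) 0 0 (kcf_mx bs')
  end.

Lemma kcf_mxE bs : kcf_mx bs = \matrix_(i, j)
  (t * emb (kcf_entry (@kb_coef0 F) bs i j) + s * emb (kcf_entry (@kb_coef1 F) bs i j)).
Proof.
elim: bs => [|b bs IH] /=; first by apply/matrixP => -[].
have ltF m n : (m + n < m)%N = false by rewrite ltnNge leq_addr.
have leF m (i : 'I_m) : (m <= i)%N = false by rewrite leqNgt ltn_ord.
apply/matrixP => i j; rewrite -(splitK i) -(splitK j).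
case: (split i) => a; case: (split j) => c /=.
- by rewrite block_mxEul !mxE /= !ltn_ord.
- by rewrite block_mxEur !mxE /= ltn_ord ltF leF /= rmorph0 !mulr0 addr0.
- by rewrite block_mxEdl !mxE /= ltF leF andbF /= rmorph0 !mulr0 addr0.
- by rewrite block_mxEdr IH !mxE /= !ltF !leq_addr /= !addKn.
Qed.

Definition kb_reg_det (b : kblock F) : S :=
  match b with KJ a k => (t * emb a + s) ^+ k | KN k => t ^+ k | _ => 1 end.

Ltac kblock_entry :=
  rewrite !mxE /= ?/bump ?leq0n ?add1n;
  repeat match goal with
  | |- context [(?a == ?b)%N] =>
      (rewrite (_ : (a == b)%N = false); last by apply/eqP; lia) ||
      (rewrite (_ : (a == b)%N = true); last by apply/eqP; lia)
  end;
  by rewrite /= ?rmorph0 ?rmorph1 ?mulr0 ?mulr1 ?addr0 ?add0r.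

Ltac det_trig_kblock :=
  apply: det_trig_const => [|i]; [apply/is_trig_mxP => i j lt|]; kblock_entry.

Lemma det_kblock_minor sdiag (b : kblock F) :
  \det (mxsub (kb_rsel sdiag b) (kb_csel sdiag b) (kblock_mx b)) =
  (if sdiag then s else t) ^+ kb_sing b * kb_reg_det b.
Proof.
case: b => [k|k|a k|k]; rewrite /= ?expr0 ?mul1r ?mulr1; case: sdiag => //=;
  first [det_trig_kblock | rewrite -det_tr; det_trig_kblock].
Qed.

Lemma det_kcf_minor sdiag bs :
  \det (mxsub (kcf_rsel sdiag bs) (kcf_csel sdiag bs) (kcf_mx bs)) =
  (if sdiag then s else t) ^+ sumn (map (@kb_sing F) bs) * \prod_(b <- bs) kb_reg_det b.
Proof.
elim: bs => [|b bs IH]; first by rewrite big_nil det_mx00 mulr1.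
by rewrite big_cons /= mxsub_block_diag det_ublock det_kblock_minor IH exprD mulrACA.
Qed.
End KroneckerPencil.

Lemma prod_kb_reg_det_neq0 (F : fieldType) (S : idomainType) (emb : {rmorphism F -> S})
    (t s : S) bs :
  t != 0 -> (forall a, t * emb a + s != 0) -> \prod_(b <- bs) kb_reg_det emb t s b != 0.
Proof.
move=> t0 ts0; elim/big_rec: _ => [|[k|k|a k|k] x _ x0]; rewrite ?oner_neq0 //=;
  by rewrite mulf_neq0 ?expf_neq0 ?oner_neq0.
Qed.

Section KroneckerRank.
Variables (F S : fieldType) (emb : {rmorphism F -> S}) (t s : S).
Local Notation kcf_mx := (kcf_mx emb t s).

Lemma kcf_mx_rank_le bs : (\rank (kcf_mx bs) <= sumn (map (@kb_size F) bs))%N.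
Proof.
elim: bs => [|b bs IH] /=; first exact: rank_leq_row.
rewrite rank_diag_block_mx leq_add //.
by case: b => *; [apply: rank_leq_row | apply: rank_leq_col | apply: rank_leq_row ..].
Qed.

Lemma kcf_mx_rank sdiag bs :
  (if sdiag then s else t) ^+ sumn (map (@kb_sing F) bs) *
    \prod_(b <- bs) kb_reg_det emb t s b != 0 ->
  \rank (kcf_mx bs) = sumn (map (@kb_size F) bs).
Proof.
rewrite -det_kcf_minor => minor_neq0; apply/eqP; rewrite eqn_leq kcf_mx_rank_le /=.
apply: leq_trans (mxrank_mxsub (kcf_rsel sdiag bs) (kcf_csel sdiag bs) _).
by rewrite mxrank_unit // unitmxE unitfE.
Qed.

End KroneckerRank.

Section PencilInvariants.
Variable F : fieldType.
Local Notation kcf_coef_mx sel bs :=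
  (\matrix_(i < sumn (map (@kb_rows F) bs), j < sumn (map (@kb_cols F) bs))
     kcf_entry sel bs i j).
Local Notation kcf0 bs := (kcf_coef_mx (@kb_coef0 F) bs).
Local Notation kcf1 bs := (kcf_coef_mx (@kb_coef1 F) bs).

Lemma pencil_rank_equiv p q (A0 A1 : 'M[F]_(p, q)) (P : 'M[F]_p) (Q : 'M[F]_q) :
  P \in unitmx -> Q \in unitmx ->
  pencil_rank (P *m A0 *m Q) (P *m A1 *m Q) = pencil_rank A0 A1.
Proof.
move=> uP uQ; rewrite /pencil_rank.
have -> : map_mx polyC (P *m A0 *m Q) + 'X *: map_mx polyC (P *m A1 *m Q) =
    map_mx polyC P *m (map_mx polyC A0 + 'X *: map_mx polyC A1) *m map_mx polyC Q.
  by rewrite !map_mxM mulmxDr mulmxDl -scalemxAr -scalemxAl.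
by rewrite !map_mxM mxrank_mul_unit // -map_mx_comp map_unitmx.
Qed.

Lemma pencil_rank_leq p q (A0 A1 : 'M[F]_(p, q)) : (pencil_rank A0 A1 <= p)%N.
Proof. exact: rank_leq_row. Qed.

Lemma pencil_rank_kcf bs : pencil_rank (kcf0 bs) (kcf1 bs) = sumn (map (@kb_size F) bs).
Proof.
have -> : pencil_rank (kcf0 bs) (kcf1 bs) =
    \rank (kcf_mx (@tofrac _ \o polyC) 1 (tofrac 'X) bs).
  rewrite /pencil_rank kcf_mxE; congr (\rank _); apply/matrixP => i j.
  by rewrite !mxE /= rmorphD rmorphM mul1r.
apply: (@kcf_mx_rank _ _ _ _ _ true).
rewrite mulf_neq0 ?expf_neq0 ?tofrac_eq0 ?polyX_eq0 // prod_kb_reg_det_neq0 ?oner_neq0 // => a.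
by rewrite mul1r /= -rmorphD tofrac_eq0 addrC -size_poly_eq0 size_XaddC.
Qed.

Lemma pencil_rank_is_KCF p q (A0 A1 : 'M[F]_(p, q)) bs :
  is_KCF A0 A1 bs -> pencil_rank A0 A1 = sumn (map (@kb_size F) bs).
Proof.
case=> Hp Hq [P [Q [uP uQ e0 e1]]]; subst p q.
by rewrite -(pencil_rank_equiv A0 A1 uP uQ) e0 e1 pencil_rank_kcf.
Qed.

Local Notation C := (mpolyC 2 (R := F)).
Local Notation s := ('X_(0 : 'I_2) : {mpoly F[2]}).
Local Notation t := ('X_(1 : 'I_2) : {mpoly F[2]}).

Lemma hpencil_equiv p q (A0 A1 : 'M[F]_(p, q)) (P : 'M[F]_p) (Q : 'M[F]_q) :
  hpencil (P *m A0 *m Q) (P *m A1 *m Q) = map_mx C P *m hpencil A0 A1 *m map_mx C Q.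
Proof.
have hpencilE p' q' (M0 M1 : 'M[F]_(p', q')) :
    hpencil M0 M1 = t *: map_mx C M0 + s *: map_mx C M1.
  by apply/matrixP => i j; rewrite !mxE.
rewrite !hpencilE !map_mxM mulmxDr mulmxDl -!scalemxAr.
by rewrite [in LHS]scalemxAl [X in _ + X = _]scalemxAl.
Qed.

Lemma hpencil_kcf bs : hpencil (kcf0 bs) (kcf1 bs) = kcf_mx C t s bs.
Proof. by rewrite kcf_mxE; apply/matrixP => i j; rewrite !mxE. Qed.

Lemma linear_form_neq0 (a : F) : t * C a + s != 0.
Proof.
apply/eqP => /(congr1 (mcoeff U_(0 : 'I_2))).
rewrite mcoeffD mulrC mul_mpolyC mcoeffZ !mcoeffXU /= mulr0 add0r mcoeff0.
by move/eqP; rewrite oner_eq0.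
Qed.

Lemma tdeg_linear_form (a : F) : (tdeg (t * C a + s) <= 1)%N.
Proof.
rewrite /tdeg; suff : (msize (t * C a + s) <= 2)%N by case: (msize _) => [|[|[|]]].
apply: leq_trans (msizeD_le _ _) _; rewrite geq_max msizeX mdeg1 andbT.
by rewrite mulrC mul_mpolyC (leq_trans (msizeZ_le _ _)) // msizeX mdeg1.
Qed.

Lemma tdeg_prod_kb_reg_det bs :
  (tdeg (\prod_(b <- bs) kb_reg_det C t s b) <= sumn (map (@kb_reg F) bs))%N.
Proof.
elim: bs => [|b bs IH]; first by rewrite big_nil tdeg1.
rewrite big_cons tdegM ?prod_kb_reg_det_neq0 ?mpolyX_neq0 //; last first.
- exact: linear_form_neq0.
- by case: b => [k|k|a k|k]; rewrite ?oner_neq0 ?expf_neq0 ?linear_form_neq0 ?mpolyX_neq0.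
apply: leq_add IH; case: b => [k|k|a k|k] /=; rewrite ?tdeg1 //.
- by rewrite tdegXn ?linear_form_neq0 // -[leqRHS]muln1 leq_mul2l tdeg_linear_form orbT.
- by rewrite tdegXn ?mpolyX_neq0 // tdegX muln1.
Qed.

Lemma hom_inv_factors_kcf p q (A0 A1 : 'M[F]_(p, q)) bs phi :
  is_KCF A0 A1 bs -> is_hom_inv_factors A0 A1 phi ->
  (forall i, (1 <= i <= pencil_rank A0 A1)%N -> phi i != 0) /\
  (\sum_(1 <= i < (pencil_rank A0 A1).+1) tdeg (phi i) <= sumn (map (@kb_reg F) bs))%N.
Proof.
move=> KA [_ _ det_div]; have rk := pencil_rank_is_KCF KA.
case: KA => Hp Hq [P [Q [uP uQ e0 e1]]]; subst p q; rewrite rk in det_div *.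
set n := sumn _ in det_div *; case: (posnP n) => [-> | n_gt0].
  by split=> [i /andP [/leq_trans lt /lt] | ]; rewrite ?big_geq.
have [D_minor _] := det_div n (introT andP (conj n_gt0 (leqnn n))).
set D := \prod_(1 <= i < n.+1) phi i in D_minor *.
have D_kcf y : is_minor n (kcf_mx C t s bs) y -> dvdr D y.
  by rewrite -hpencil_kcf -e0 -e1 hpencil_equiv; apply/dvdr_minor_mulr/dvdr_minor_mull.
set H := \prod_(b <- bs) kb_reg_det C t s b.
have H0 : H != 0 by rewrite prod_kb_reg_det_neq0 ?mpolyX_neq0 //; apply: linear_form_neq0.
have D_XH (sdiag : bool) : dvdr D ((if sdiag then s else t) ^+ sumn (map (@kb_sing F) bs) * H).
  by apply: D_kcf; exists (kcf_rsel sdiag bs), (kcf_csel sdiag bs); rewrite -det_kcf_minor.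
have D0 : D != 0.
  have [c /eqP] := D_XH true; apply: contraTneq => ->.
  by rewrite mulr0 mulf_eq0 negb_or H0 andbT expf_neq0 ?mpolyX_neq0.
have DH : dvdr D H := dvdr_mpolyXn_coprime (isT : (0 : 'I_2) != 1) D0 (D_XH true) (D_XH false).
have phi0 i : (1 <= i <= n)%N -> phi i != 0.
  move=> i_n; move: D0; rewrite /D prodf_seq_neq0 => /allP /(_ i).
  by rewrite mem_index_iota ltnS => /(_ i_n).
split=> //; rewrite -tdeg_prod => [|i]; last by rewrite mem_index_iota ltnS => /phi0.
by apply: leq_trans (tdeg_prod_kb_reg_det bs); case: (dvdr_tdeg DH H0).
Qed.

End PencilInvariants.

(** * Conjugate partitions *)

Lemma conj_part_eq0 (c : seq nat) n k :
  (forall y, y \in c -> y <= n)%N -> (n < k)%N -> conj_part c k = 0%N.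
Proof.
move=> c_n nk; apply/eqP; rewrite -leqn0 leqNgt -has_count.
by apply/hasP => -[y /c_n yn /= ky]; move: (leq_trans nk (leq_trans ky yn)); rewrite ltnn.
Qed.

Lemma sum_conj_part (c : seq nat) n :
  (forall y, y \in c -> y <= n)%N -> (\sum_(1 <= k < n.+1) conj_part c k = sumn c)%N.
Proof.
elim: c => [|y c IH] c_n; first by rewrite big1.
rewrite /conj_part /= big_split /= IH => [|z zc]; last by apply: c_n; rewrite in_cons zc orbT.
congr (_ + _)%N; have yn : (y <= n)%N by apply: c_n; rewrite mem_head.
transitivity (\sum_(1 <= k < n.+1) (1 <= k < y.+1))%N.
  by apply: eq_big_nat => k /andP [k1 _]; rewrite k1 ltnS.
by rewrite sum_index_window ?subn1.
Qed.

Lemma ext_conj_eq0 n0 (a : seq nat) n k :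
  (forall y, y \in a -> y <= n)%N -> (n < k)%N -> ext_conj n0 a k = 0%N.
Proof. by move=> a_n nk; rewrite /ext_conj gtn_eqF ?(leq_trans _ nk) // (conj_part_eq0 a_n). Qed.

Lemma sum_ext_conj n0 (a : seq nat) n :
  (forall y, y \in a -> y <= n)%N -> (\sum_(1 <= k < n.+1) ext_conj n0 a k = sumn a)%N.
Proof.
move=> a_n; rewrite -(sum_conj_part a_n).
by apply: eq_big_nat => -[|k] //; rewrite /ext_conj.
Qed.

(** * The shape of s - r *)

Definition bounded_difference (r s : nat -> nat) (PA PB : Prop) : Prop :=
  exists a' b' : nat,
    (a' < b')%N /\
    [/\ (forall i, (i <= a')%N -> s i = r i),
        (forall i, (a'.+1 <= i <= b')%N ->
           - (a'.+2)%:Z <= (s i)%:Z - (r i)%:Z <= (a'.+2)%:Z),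
        (forall i, (b'.+1 <= i)%N ->
           - (b'.+1)%:Z <= (s i)%:Z - (r i)%:Z <= (b'.+1)%:Z),
        ((exists i, (a'.+1 <= i <= b')%N /\ (s i)%:Z - (r i)%:Z = - (a'.+2)%:Z) \/
         (exists i, (b' < i)%N /\ (s i)%:Z - (r i)%:Z = - (b'.+1)%:Z) -> PA) &
        ((exists i, (a'.+1 <= i <= b')%N /\ (s i)%:Z - (r i)%:Z = (a'.+2)%:Z) \/
         (exists i, (b' < i)%N /\ (s i)%:Z - (r i)%:Z = (b'.+1)%:Z) -> PB)].

Lemma bounded_differenceC r s PA PB :
  bounded_difference s r PB PA -> bounded_difference r s PA PB.
Proof.
move=> [a' [b' [ab [eq_lo mid hi negP posP]]]]; exists a', b'; split=> //; split.
- by move=> i /eq_lo.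
- by move=> i /mid; lia.
- by move=> i /hi; lia.
- by move=> [[i [? ?]] | [i [? ?]]]; apply: posP; [left | right]; exists i; split=> //; lia.
- by move=> [[i [? ?]] | [i [? ?]]]; apply: negP; [left | right]; exists i; split=> //; lia.
Qed.

Lemma bounded_difference_lt (r s : nat -> nat) rho x E dA dB (PA PB : Prop) :
  (0 < x < E)%N -> (E <= rho.+1)%N ->
  (forall i, i < x -> s i = r i)%N -> (forall i, x <= i < E -> s i < r i)%N ->
  (forall i, rho < i -> r i = 0)%N -> (forall i, rho < i -> s i = 0)%N ->
  (dA + \sum_(1 <= i < rho.+1) (r i - s i) <= E)%N ->
  (dB + \sum_(1 <= i < rho.+1) (s i - r i) <= E)%N ->
  (dA = 0%N -> PA) -> (dB = 0%N -> PB) -> bounded_difference r s PA PB.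
Proof.
move=> /andP [x_gt0 xE] E_rho below window r0 s0 sumA sumB dA0 dB0.
have win_pos j : (x <= j < E)%N -> (0 < r j - s j)%N by move/window; rewrite subn_gt0.
have x_E : (1 <= x <= E)%N by lia.
have in_window i : (x <= i < E)%N -> (dA + (r i - s i) <= x.+1)%N.
  move=> i_win; have i_rho : (1 <= i <= rho)%N by lia.
  by have := leq_term_window_sum x_E E_rho win_pos i_rho; rewrite i_win; lia.
have above_r i : (E <= i)%N -> (r i - s i <= x)%N.
  move=> Ei; case: (leqP i rho) => [i_rho | /r0 -> //].
  have i_rho' : (1 <= i <= rho)%N by lia.
  by have := leq_term_window_sum x_E E_rho win_pos i_rho'; rewrite ltnNge Ei andbF; lia.
have above_s i : (1 <= i)%N -> (dB + (s i - r i) <= E)%N.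
  move=> i1; case: (leqP i rho) => [i_rho | /s0 ->]; last by lia.
  have i_rho' : (1 <= i <= rho)%N by lia.
  have no_win j : (1 <= j < 1)%N -> (0 < s j - r j)%N by lia.
  by have := @leq_term_window_sum (fun j => s j - r j)%N rho 1 1 i isT isT no_win i_rho'; lia.
exists x.-1, E.-1; split; first by lia.
split.
- by move=> i ix; apply: below; lia.
- move=> i i_win; have i_win' : (x <= i < E)%N by lia.
  by have := window i i_win'; have := in_window i i_win'; lia.
- by move=> i Ei; have := above_r i; have := above_s i; lia.
- case=> -[i [i_win ri]]; last by have := above_r i; lia.
  by apply: dA0; have := in_window i; lia.
- case=> -[i [i_win ri]]; first by have := window i; lia.
  by apply: dB0; have := above_s i; lia.
Qed.

Lemma least_crossing (r s : nat -> nat) rho x E E' :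
  (forall i, rho < i -> r i = 0)%N -> (s x < r x)%N ->
  is_least (fun j => x <= j /\ r j <= s j)%N E ->
  is_least (fun j => x <= j /\ s j <= r j)%N E' ->
  [/\ E' = x, (x < E <= rho.+1)%N & forall i, (x <= i < E)%N -> (s i < r i)%N].
Proof.
move=> r0 lt [[xE rsE] E_min] [[xE' _] E'_min].
have x_rho : (x <= rho)%N by case: leqP => // /r0 rx; rewrite rx in lt.
split.
- by apply/eqP; rewrite eqn_leq xE' andbT E'_min //; split=> //; apply: ltnW.
- have E_rho : (E <= rho.+1)%N by apply: E_min; rewrite r0 //; split; lia.
  by rewrite E_rho andbT ltn_neqAle xE andbT; apply: contraTneq rsE => <-; rewrite -ltnNge.
- by move=> i /andP [xi iE]; rewrite ltnNge; apply: contraTN iE => sr; rewrite -leqNgt E_min.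
Qed.

Lemma bounded_difference_of_excess (r s : nat -> nat) rho x E E' dA dB (PA PB : Prop) :
  r 0%N = s 0%N -> (forall i, rho < i -> r i = 0)%N -> (forall i, rho < i -> s i = 0)%N ->
  is_least (fun i => r i <> s i) x ->
  is_least (fun j => x <= j /\ r j <= s j)%N E ->
  is_least (fun j => x <= j /\ s j <= r j)%N E' ->
  (\sum_(1 <= i < rho.+1) r i + dA <=
     \sum_(1 <= i < rho.+1) minn (r i) (s i) + maxn E E')%N ->
  (\sum_(1 <= i < rho.+1) s i + dB <=
     \sum_(1 <= i < rho.+1) minn (r i) (s i) + maxn E E')%N ->
  (dA = 0%N -> PA) -> (dB = 0%N -> PB) -> bounded_difference r s PA PB.
Proof.
move=> rs_0 r0 s0 [rs_x x_min] HE HE' sumA sumB dA0 dB0.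
have x_gt0 : (0 < x)%N by rewrite lt0n; apply: contra_notN rs_x => /eqP ->.
have below i : (i < x)%N -> s i = r i.
  by move=> ix; apply/esym/eqP; apply: contraTT ix => /eqP /x_min; rewrite -leqNgt.
have minn_sumC : (\sum_(1 <= i < rho.+1) minn (r i) (s i) =
    \sum_(1 <= i < rho.+1) minn (s i) (r i))%N by apply: eq_bigr => i _; apply: minnC.
rewrite (sum_subn_minn r s) in sumA; rewrite minn_sumC (sum_subn_minn s r) in sumB.
case: (ltngtP (s x) (r x)) => [lt | gt | eq]; last by case: rs_x.
- have [E'x /andP [xE E_rho] win] := least_crossing r0 lt HE HE'.
  rewrite E'x (maxn_idPl (ltnW xE)) in sumA sumB.
  by apply: (bounded_difference_lt _ E_rho below win r0 s0 _ _ dA0 dB0); rewrite ?x_gt0 //; lia.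
- apply: bounded_differenceC; have [Ex /andP [xE' E'_rho] win] := least_crossing s0 gt HE' HE.
  rewrite Ex (maxn_idPr (ltnW xE')) in sumA sumB.
  have below' i : (i < x)%N -> r i = s i by move/below.
  by apply: (bounded_difference_lt _ E'_rho below' win s0 r0 _ _ dB0 dA0); rewrite ?x_gt0 //; lia.
Qed.

(** * Minimal indices and invariant factors of a pencil *)

Section KroneckerIndices.
Variables (F : fieldType) (p q : nat) (A0 A1 : 'M[F]_(p, q)) (bs : seq (kblock F)).
Hypothesis KA : is_KCF A0 A1 bs.
Local Notation rho := (pencil_rank A0 A1).

Lemma kcf_min_ind_le_rank :
  (forall y, y \in col_min_ind bs -> y <= rho)%N /\
  (forall y, y \in row_min_ind bs -> y <= rho)%N.
Proof. by rewrite (pencil_rank_is_KCF KA) sumn_kb_size; split=> y /leq_sumn_mem; lia. Qed.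

Lemma kcf_conj_index_bound n0 n0' phi : is_hom_inv_factors A0 A1 phi ->
  (\sum_(1 <= i < rho.+1) ext_conj n0 (col_min_ind bs) i +
   \sum_(1 <= i < rho.+1) ext_conj n0' (row_min_ind bs) i +
   \sum_(1 <= i < rho.+1) tdeg (phi i) <= rho)%N.
Proof.
move=> HA; have [c_rho u_rho] := kcf_min_ind_le_rank.
have [_ deg_le] := hom_inv_factors_kcf KA HA.
have := pencil_rank_is_KCF KA; rewrite sumn_kb_size !sum_ext_conj //; lia.
Qed.

Lemma kcf_excess_bound n0 n0' phi psi g M :
  is_hom_inv_factors A0 A1 phi ->
  (forall i, 1 <= i < rho -> dvdr (g i) (phi i.+1) /\ dvdr (g i) (psi i.+1))%N ->
  (rho <= \sum_(1 <= i < rho) tdeg (g i) +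
          \sum_(1 <= i < rho.+1) ext_conj n0' (row_min_ind bs) i + M)%N ->
  [/\ forall i, (rho < i)%N -> ext_conj n0 (col_min_ind bs) i = 0%N,
      (\sum_(1 <= i < rho.+1) ext_conj n0 (col_min_ind bs) i +
         (\sum_(1 <= i < rho.+1) tdeg (phi i) - \sum_(1 <= i < rho) tdeg (g i)) <= M)%N &
      ((\sum_(1 <= i < rho.+1) tdeg (phi i) - \sum_(1 <= i < rho) tdeg (g i))%N = 0%N ->
         forall j, (1 <= j <= rho)%N -> dvdr (phi j) (psi j))].
Proof.
move=> HA g_dvd rho_le; have [phi0 _] := hom_inv_factors_kcf KA HA.
have := kcf_conj_index_bound n0 n0' HA; have := sum_tdeg_gcd_le phi0 g_dvd.
split; [| lia | move/eqP; rewrite subn_eq0; exact: dvdr_inv_factors_of_sum_tdeg].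
by move=> i; apply: ext_conj_eq0; case: kcf_min_ind_le_rank.
Qed.

End KroneckerIndices.

Theorem lemma5p2 (F : closedFieldType) (p q : nat)
  (A0 A1 B0 B1 : 'M[F]_(p, q))
  (bsA bsB : seq (kblock F))
  (phi psi : nat -> {mpoly F[2]})
  (g : nat -> {mpoly F[2]})
  (x E E' : nat) :
  let rho1 := pencil_rank A0 A1 in
  let rho2 := pencil_rank B0 B1 in
  let rho := minn rho1 rho2 in
  let r := ext_conj (q - rho1) (col_min_ind bsA) in
  let s := ext_conj (q - rho2) (col_min_ind bsB) in
  let r' := ext_conj (p - rho1) (row_min_ind bsA) in
  let s' := ext_conj (p - rho2) (row_min_ind bsB) in
  is_KCF A0 A1 bsA -> is_KCF B0 B1 bsB ->
  is_hom_inv_factors A0 A1 phi -> is_hom_inv_factors B0 B1 psi ->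
  (* g i is gcd(phi_(i+1), psi_(i+1)) *)
  (forall i, (1 <= i < rho)%N -> is_gcd (g i) (fun y => y = phi i.+1 \/ y = psi i.+1)) ->
  (* r <> s and r' = s' *)
  (exists i, r i <> s i) ->
  (forall i, r' i = s' i) ->
  (* x = min{i : r_i <> s_i} *)
  is_least (fun i => r i <> s i) x ->
  (* e = E - 1, where E = min{j >= x : s_j >= r_j} (j = i + 1) *)
  is_least (fun j => (x <= j)%N /\ (r j <= s j)%N) E ->
  (* e' = E' - 1, where E' = min{j >= x : r_j >= s_j} *)
  is_least (fun j => (x <= j)%N /\ (s j <= r j)%N) E' ->
  (* G <= sum_{i=1}^rho min(r_i, s_i) + max(e, e') *)
  ((rho%:Z - 1) - (\sum_(1 <= i < rho) (tdeg (g i))%:Z)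
     - (\sum_(1 <= i < rho.+1) (r' i)%:Z)
   <= (\sum_(1 <= i < rho.+1) (minn (r i) (s i))%:Z) + ((maxn E E')%:Z - 1))%R ->
  exists a' b' : nat,
    (a' < b')%N /\
    [/\ (forall i, (i <= a')%N -> s i = r i),
        (forall i, (a'.+1 <= i <= b')%N ->
           - (a'.+2)%:Z <= (s i)%:Z - (r i)%:Z <= (a'.+2)%:Z),
        (forall i, (b'.+1 <= i)%N ->
           - (b'.+1)%:Z <= (s i)%:Z - (r i)%:Z <= (b'.+1)%:Z),
        ((exists i, (a'.+1 <= i <= b')%N /\ (s i)%:Z - (r i)%:Z = - (a'.+2)%:Z) \/
         (exists i, (b' < i)%N /\ (s i)%:Z - (r i)%:Z = - (b'.+1)%:Z) ->
         forall j, (1 <= j <= rho)%N -> dvdr (phi j) (psi j)) &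
        ((exists i, (a'.+1 <= i <= b')%N /\ (s i)%:Z - (r i)%:Z = (a'.+2)%:Z) \/
         (exists i, (b' < i)%N /\ (s i)%:Z - (r i)%:Z = (b'.+1)%:Z) ->
         forall j, (1 <= j <= rho)%N -> dvdr (psi j) (phi j))].
Proof.
move=> rho1 rho2 rho r s r' s' KA KB HA HB g_gcd _ r's' x_least E_least E'_least G_le.
have rho12 : rho1 = rho2.
  have := pencil_rank_leq A0 A1; have := pencil_rank_leq B0 B1.
  by have := r's' 0%N; rewrite /r' /s' /ext_conj /=; lia.
have rhoE : rho = rho1 by rewrite /rho rho12 minnn.
have g_dvd i : (1 <= i < rho1)%N -> dvdr (g i) (phi i.+1) /\ dvdr (g i) (psi i.+1).
  by rewrite -rhoE => /g_gcd [dvd_g _]; split; apply: dvd_g; [left | right].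
have g_dvd' i : (1 <= i < rho2)%N -> dvdr (g i) (psi i.+1) /\ dvdr (g i) (phi i.+1).
  by rewrite -rho12 => /g_dvd [].
set M := (\sum_(1 <= i < rho.+1) minn (r i) (s i) + maxn E E')%N.
have leA : (rho1 <= \sum_(1 <= i < rho1) tdeg (g i) + \sum_(1 <= i < rho1.+1) r' i + M)%N.
  by rewrite !sum_Posz -rhoE in G_le *; lia.
have leB : (rho2 <= \sum_(1 <= i < rho2) tdeg (g i) + \sum_(1 <= i < rho2.+1) s' i + M)%N.
  by rewrite -rho12 (eq_bigr r' (fun i _ => esym (r's' i))).
have [r0 excA divA] := kcf_excess_bound KA (q - rho1) HA g_dvd leA.
have [s0 excB divB] := kcf_excess_bound KB (q - rho2) HB g_dvd' leB.
rewrite -/rho1 -/r -rhoE in r0 excA divA; rewrite -/rho2 -/s -rho12 -rhoE in s0 excB divB.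
apply: (bounded_difference_of_excess _ r0 s0 x_least E_least E'_least excA excB divA divB).
by rewrite /r /s /ext_conj /= rho12.
Qed.
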